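(* Let $G=(V,E)$ be a directed network with link set $A=E$. For each origin–destination (OD) pair $(o,d)$ let $K_{od}$ be a finite nonempty set of paths, $q_{od}\ge 0$ the demand, and $\delta^{od}_{a,k}\in\{0,1\}$ indicate whether path $k\in K_{od}$ uses link $a$. Let $\xi$ be a random network state, and for each link $a$ let $$t_a(x,\xi)=t_a^0(\xi)\Big[1+\alpha_a(\xi)\big(x/c_a(\xi)\big)^{\beta_a(\xi)}\Big]+\Delta_a(\xi),\qquad x\ge 0,$$ with $t_a^0(\xi)>0$, $c_a(\xi)>0$, $\alpha_a(\xi)\ge 0$, $\beta_a(\xi)\ge 1$, $\Delta_a(\xi)\ge 0$ (with all expectations below finite). Let $\theta>0$. For path flows $f=(f^{od}_k)$ define link flows $x_a=\sum_{o,d}\sum_{k\in K_{od}} f^{od}_k\delta^{od}_{a,k}$ and $$Z(f,\xi)=\sum_{a\in A}\int_0^{x_a} t_a(\omega,\xi)\,d\omega+\frac1\theta\sum_{o,d}\sum_{k\in K_{od}}\Big[(f^{od}_k+1)\ln(f^{od}_k+1)-f^{od}_k\Big].$$ Then the objective $f\mapsto \mathbb{E}[Z(f,\xi)]$ is convex on $\{f\ge 0\}$, and the problem of minimizing $\mathbb{E}[Z(f,\xi)]$ subject to $\sum_{k\in K_{od}} f^{od}_k=q_{od}$ for all $(o,d)$ and $f^{od}_k\ge 0$ has a unique optimal path flow vector.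
   Context: This is the truncated-logit stochastic user equilibrium (TSUE) program with an extended BPR link travel time function whose parameters depend on the random state $\xi$. *)

From HB Require Import structures.
From mathcomp Require Import all_boot all_order all_algebra.
From mathcomp Require Import all_classical all_reals all_analysis.
Set Implicit Arguments. Unset Strict Implicit. Unset Printing Implicit Defensive.
Import Order.TTheory GRing.Theory Num.Theory.
Local Open Scope classical_set_scope.
Local Open Scope ring_scope.

Section TSUE.
Variables (R : realType) (d : measure_display) (T : measurableType d).
(* A : links, W : OD pairs, K : all paths (disjoint union of the K_od),
   od k : the OD pair served by path k, delta k a : path k uses link a. *)
Variables (A W K : finType) (od : K -> W) (delta : K -> A -> bool).

Definition link_time (t0 c alpha beta Delta : A -> T -> R) (a : A) (x : R) (xi : T) : R :=
  t0 a xi * (1 + alpha a xi * powR (x / c a xi) (beta a xi)) + Delta a xi.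

Definition link_flow (f : K -> R) (a : A) : R :=
  \sum_(k : K) f k * (delta k a)%:R.

Definition Zobj (t0 c alpha beta Delta : A -> T -> R) (theta : R) (f : K -> R) (xi : T) : R :=
  \sum_(a : A) Rintegral lebesgue_measure `[0, link_flow f a]
       (fun w => link_time t0 c alpha beta Delta a w xi)
  + theta^-1 * \sum_(k : K) ((f k + 1) * ln (f k + 1) - f k).

(* E[Z(f, xi)], real-valued (finite under the integrability hypothesis) *)
Definition EZ (Pr : probability T R) (t0 c alpha beta Delta : A -> T -> R) (theta : R)
  (f : K -> R) : R :=
  fine ('E_Pr[Zobj t0 c alpha beta Delta theta f])%E.

Definition feasible (q : W -> R) (f : K -> R) : Prop :=
  (forall w : W, \sum_(k : K | od k == w) f k = q w) /\ (forall k, 0 <= f k).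
End TSUE.

From HB Require Import structures.
From mathcomp Require Import all_boot all_order all_algebra.
From mathcomp Require Import all_classical all_reals all_analysis.
From mathcomp Require Import lra ring measurable_realfun.
Set Implicit Arguments. Unset Strict Implicit. Unset Printing Implicit Defensive.
Import Order.TTheory GRing.Theory Num.Theory.
Import numFieldNormedType.Exports.
Local Open Scope classical_set_scope.
Local Open Scope ring_scope.

(* Z(f, xi) is the sum of the primitives F_a(., xi) of the nondecreasing BPR
   times, evaluated at the link flows (linear in f), and of the deterministic
   term theta^-1 sum_k h(f_k) with h(x) = (x + 1) ln (x + 1) - x.  Both F_a and h
   lie above their tangent lines, so Z(., xi) is convex for every xi and hence
   so is E[Z]; h is strictly convex and does not depend on xi, so E[Z] is
   strictly convex and has at most one minimizer on the convex feasible set.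
   That set is a nonempty compact polytope, and E[Z] is Lipschitz on it: each
   slope t_a(x_a, xi) is bounded by Z(., xi) at a large constant flow, which is
   integrable. *)

Section LnBounds.
Variable R : realType.
Implicit Types a b z : R.

Lemma ln_lt_subr1 z : 0 < z -> z != 1 -> ln z < z - 1.
Proof.
move=> z0 z1; have lnz0 : ln z != 0.
  by apply: contra z1 => /eqP lnz0; rewrite -[z]lnK ?posrE // lnz0 expR0.
by have := expR_gt1Dx lnz0; rewrite lnK ?posrE //; lra.
Qed.

Lemma ln_le_subr1 z : 0 < z -> ln z <= z - 1.
Proof.
move=> z0; have [->|z1] := eqVneq z 1; first by rewrite ln1 subrr.
exact/ltW/ln_lt_subr1.
Qed.

Lemma subr_lt_mul_lnB a b : 0 < a -> 0 < b -> a != b -> a - b < a * (ln a - ln b).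
Proof.
move=> a0 b0 ab; have ba1 : b / a != 1.
  by apply: contra ab => /eqP/divr1_eq ->.
have := @ln_lt_subr1 (b / a) (divr_gt0 b0 a0) ba1.
rewrite lnM ?posrE ?invr_gt0 // lnV ?posrE // -(ltr_pM2l a0).
have -> : a * (b / a - 1) = b - a by field; rewrite gt_eqF.
by rewrite mulrBr; lra.
Qed.

Lemma subr_le_mul_lnB a b : 0 < a -> 0 < b -> a - b <= a * (ln a - ln b).
Proof.
move=> a0 b0; have [->|ab] := eqVneq a b; first by rewrite !subrr mulr0.
exact/ltW/subr_lt_mul_lnB.
Qed.

End LnBounds.

Section ConvexOfTangent.
Variables (R : realFieldType) (phi slope : R -> R).

Lemma convex_of_tangent :
  (forall x y, 0 <= x -> 0 <= y -> phi x + slope x * (y - x) <= phi y) ->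
  forall x y l, 0 <= x -> 0 <= y -> 0 <= l <= 1 ->
  phi (l * x + (1 - l) * y) <= l * phi x + (1 - l) * phi y.
Proof.
move=> tangent x y l x0 y0 /andP[l0 l1].
set z := l * x + (1 - l) * y.
have z0 : 0 <= z by rewrite addr_ge0 // mulr_ge0 // subr_ge0.
have /(ler_wpM2l l0) hx := tangent z x z0 x0.
have l'0 : 0 <= 1 - l by rewrite subr_ge0.
have /(ler_wpM2l l'0) hy := tangent z y z0 y0.
have -> : phi z = l * (phi z + slope z * (x - z)) + (1 - l) * (phi z + slope z * (y - z)).
  by rewrite /z; ring.
exact: lerD.
Qed.

Lemma strict_convex_of_tangent :
  (forall x y, 0 <= x -> 0 <= y -> x != y -> phi x + slope x * (y - x) < phi y) ->
  forall x y l, 0 <= x -> 0 <= y -> 0 < l < 1 -> x != y ->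
  phi (l * x + (1 - l) * y) < l * phi x + (1 - l) * phi y.
Proof.
move=> tangent x y l x0 y0 /andP[l0 l1] xy.
set z := l * x + (1 - l) * y.
have l'0 : 0 < 1 - l by rewrite subr_gt0.
have z0 : 0 <= z by rewrite addr_ge0 // mulr_ge0 // ltW.
have zx : z != x.
  rewrite -subr_eq0 (_ : z - x = (1 - l) * (y - x)); last by rewrite /z; ring.
  by apply: mulf_neq0; [exact: lt0r_neq0 | rewrite subr_eq0 eq_sym].
have zy : z != y.
  rewrite -subr_eq0 (_ : z - y = l * (x - y)); last by rewrite /z; ring.
  by apply: mulf_neq0; [exact: lt0r_neq0 | rewrite subr_eq0].
have hx := tangent z x z0 x0 zx; rewrite -(ltr_pM2l l0) in hx.
have hy := tangent z y z0 y0 zy; rewrite -(ltr_pM2l l'0) in hy.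
have -> : phi z = l * (phi z + slope z * (x - z)) + (1 - l) * (phi z + slope z * (y - z)).
  by rewrite /z; ring.
exact: ltrD.
Qed.

End ConvexOfTangent.

Section Entropy.
Variable R : realType.
Implicit Types x y : R.

Definition ent1p x := (x + 1) * ln (x + 1) - x.

Lemma ent1p_tangent x y : 0 <= x -> 0 <= y ->
  ent1p x + ln (x + 1) * (y - x) <= ent1p y.
Proof.
move=> x0 y0; have := @subr_le_mul_lnB R (y + 1) (x + 1) ltac:(lra) ltac:(lra).
rewrite /ent1p mulrBr; lra.
Qed.

Lemma ent1p_tangent_strict x y : 0 <= x -> 0 <= y -> x != y ->
  ent1p x + ln (x + 1) * (y - x) < ent1p y.
Proof.
move=> x0 y0 xy; have yx1 : y + 1 != x + 1 by rewrite (can_eq (addrK 1)) eq_sym.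
have := @subr_lt_mul_lnB R (y + 1) (x + 1) ltac:(lra) ltac:(lra) yx1.
rewrite /ent1p mulrBr; lra.
Qed.

Lemma ent1p_ge0 x : 0 <= x -> 0 <= ent1p x.
Proof.
move=> x0; have := ent1p_tangent (lexx 0) x0.
by rewrite /ent1p add0r ln1; lra.
Qed.

Lemma ln1p_ge0 x : 0 <= x -> 0 <= ln (x + 1).
Proof. by move=> x0; rewrite ln_ge0 // lerDr. Qed.

Lemma ln1p_le x : 0 <= x -> ln (x + 1) <= x.
Proof. by move=> x0; have := @ln_le_subr1 R (x + 1) ltac:(lra); rewrite addrK. Qed.

End Entropy.

Section Primitive.
Variable R : realType.

Definition primitive (t : R -> R) (x : R) := Rintegral lebesgue_measure `[0, x] t.

Lemma integrable_itv_bounded (f : R -> R) (b1 b2 : bool) (x y M : R) :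
  measurable_fun setT f ->
  (forall z, z \in Interval (BSide b1 x) (BSide b2 y) -> `|f z| <= M) ->
  lebesgue_measure.-integrable [set` Interval (BSide b1 x) (BSide b2 y)] (EFin \o f).
Proof.
move=> mf fM; apply: measurable_bounded_integrable => //.
- have /= -> := lebesgue_measure_itv (Interval (BSide b1 x) (BSide b2 y)).
  by case: ifP; rewrite ?ltry.
- exact: measurable_funTS.
- exists M; split; first exact: num_real.
  by move=> N MN z /fM zM; apply: le_trans zM (ltW MN).
Qed.

Variable t : R -> R.
Hypothesis measurable_t : measurable_fun setT t.
Hypothesis t_ge0 : forall x, 0 <= x -> 0 <= t x.
Hypothesis t_homo : forall x y, 0 <= x -> x <= y -> t x <= t y.

Lemma integrable_itv (b1 b2 : bool) (x y : R) : 0 <= x ->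
  lebesgue_measure.-integrable [set` Interval (BSide b1 x) (BSide b2 y)] (EFin \o t).
Proof.
move=> x0; apply: (@integrable_itv_bounded t b1 b2 x y (t y)) => // z zi.
have [xz zy] : x <= z /\ z <= y.
  by move: zi; rewrite in_itv => /andP[/lteifW ? /lteifW].
by rewrite ger0_norm ?t_homo ?t_ge0 //; apply: le_trans xz.
Qed.

Lemma primitiveB x y : 0 <= x -> x <= y ->
  primitive t y - primitive t x = Rintegral lebesgue_measure `]x, y] t.
Proof.
move=> x0 xy; rewrite /primitive.
by rewrite Rintegral_itvB ?bnd_simp //; exact: integrable_itv.
Qed.

Lemma primitive_increment x y : 0 <= x -> x <= y ->
  t x * (y - x) <= primitive t y - primitive t x <= t y * (y - x).
Proof.
move=> x0 xy; rewrite primitiveB //.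
have len_oc : fine (lebesgue_measure [set` `]x, y]]) = y - x.
  have /= -> := lebesgue_measure_itv `]x, y]; rewrite lte_fin.
  case: ltP => [//|yx]; suff -> : y = x by rewrite subrr.
  exact/le_anti/andP.
have icst k : lebesgue_measure.-integrable [set` `]x, y]] (EFin \o cst k).
  by apply: (@integrable_itv_bounded (cst k) false false x y `|k|).
rewrite -len_oc -!Rintegral_cst //; apply/andP; split.
- apply: le_Rintegral => //; [exact: icst | exact: integrable_itv |].
  by move=> z; rewrite /= in_itv /= => /andP[/ltW xz _]; apply: t_homo.
- apply: le_Rintegral => //; [exact: integrable_itv | exact: icst |].
  move=> z; rewrite /= in_itv /= => /andP[/ltW xz zy]; apply: t_homo => //.
  exact: le_trans xz.
Qed.

Lemma primitive_tangent x y : 0 <= x -> 0 <= y ->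
  primitive t x + t x * (y - x) <= primitive t y.
Proof.
move=> x0 y0; have [xy|/ltW yx] := leP x y.
  by have /andP[+ _] := primitive_increment x0 xy; lra.
have /andP[_] := primitive_increment y0 yx.
have -> : t x * (y - x) = - (t x * (x - y)) by ring.
lra.
Qed.

Lemma primitive_ge0 x : 0 <= primitive t x.
Proof.
by apply: Rintegral_ge0 => z; rewrite /= in_itv /= => /andP[z0 _]; exact: t_ge0.
Qed.

End Primitive.

Section LinkTime.
Variables (R : realType) (d : measure_display) (T : measurableType d) (A : finType).
Variables (t0 c alpha beta Delta : A -> T -> R).
Hypotheses (t0_ge0 : forall a xi, 0 <= t0 a xi) (c_gt0 : forall a xi, 0 < c a xi)
  (alpha_ge0 : forall a xi, 0 <= alpha a xi) (beta_ge0 : forall a xi, 0 <= beta a xi)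
  (Delta_ge0 : forall a xi, 0 <= Delta a xi).

Lemma link_time_ge0 a x xi : 0 <= link_time t0 c alpha beta Delta a x xi.
Proof. by rewrite /link_time addr_ge0 // mulr_ge0 // addr_ge0 // mulr_ge0 // powR_ge0. Qed.

Lemma link_time_homo a xi x y : 0 <= x -> x <= y ->
  link_time t0 c alpha beta Delta a x xi <= link_time t0 c alpha beta Delta a y xi.
Proof.
move=> x0 xy; rewrite /link_time lerD2r ler_wpM2l // lerD2l ler_wpM2l //.
have c'0 : 0 < (c a xi)^-1 by rewrite invr_gt0.
have c0 := ltW (c_gt0 a xi).
rewrite ge0_ler_powR ?nnegrE ?ler_pM2r ?divr_ge0 //; exact: le_trans xy.
Qed.

Lemma measurable_link_time a xi :
  measurable_fun setT (fun x => link_time t0 c alpha beta Delta a x xi).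
Proof.
apply: measurable_funD => //; apply: measurable_funM => //.
apply: measurable_funD => //; apply: measurable_funM => //.
apply: measurableT_comp (measurable_powR _) _.
exact: measurable_funM.
Qed.

End LinkTime.

Section PathFlows.
Variables (R : realType) (A K : finType) (delta : K -> A -> bool).
Implicit Types (f g : K -> R) (l : R).

Definition mix l f g : K -> R := fun k => l * f k + (1 - l) * g k.

Definition dist1 f g := \sum_k `|f k - g k|.

Lemma dist1_ge0 f g : 0 <= dist1 f g.
Proof. by apply: sumr_ge0. Qed.

Lemma dist1C f g : dist1 f g = dist1 g f.
Proof. by apply: eq_bigr => k _; rewrite distrC. Qed.

Lemma mix_ge0 l f g : 0 <= l <= 1 -> (forall k, 0 <= f k) -> (forall k, 0 <= g k) ->
  forall k, 0 <= mix l f g k.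
Proof.
by move=> /andP[l0 l1] f0 g0 k; rewrite addr_ge0 // mulr_ge0 // subr_ge0.
Qed.

Lemma link_flow_mix l f g a : link_flow delta (mix l f g) a
  = l * link_flow delta f a + (1 - l) * link_flow delta g a.
Proof.
by rewrite /link_flow !mulr_sumr -big_split; apply: eq_bigr => k _ /=; rewrite /mix; ring.
Qed.

Lemma link_flow_ge0 f a : (forall k, 0 <= f k) -> 0 <= link_flow delta f a.
Proof. by move=> f0; apply: sumr_ge0 => k _; rewrite mulr_ge0. Qed.

Lemma link_flow_le_sum f a : (forall k, 0 <= f k) -> link_flow delta f a <= \sum_k f k.
Proof.
by move=> f0; apply: ler_sum => k _; case: (delta k a); rewrite ?mulr1 ?mulr0.
Qed.

Lemma link_flow_dist f g a :
  `|link_flow delta f a - link_flow delta g a| <= dist1 f g.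
Proof.
rewrite /link_flow -sumrB; apply: le_trans (ler_norm_sum _ _ _) _.
by apply: ler_sum => k _; rewrite -mulrBl; case: (delta k a); rewrite ?mulr1 ?mulr0 ?normr0.
Qed.

Lemma link_flow_unused f a : (forall k, ~~ delta k a) -> link_flow delta f a = 0.
Proof. by move=> unused; apply: big1 => k _; rewrite (negbTE (unused k)) mulr0. Qed.

End PathFlows.

Section Expectation.
Variables (R : realType) (d : measure_display) (T : measurableType d).
Variable P : probability T R.

Lemma le_Rintegral_affine (H F G : T -> R) (a b k : R) :
  P.-integrable setT (EFin \o H) -> P.-integrable setT (EFin \o F) ->
  P.-integrable setT (EFin \o G) -> (forall x, H x <= a * F x + b * G x + k) ->
  Rintegral P setT H <= a * Rintegral P setT F + b * Rintegral P setT G + k.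
Proof.
move=> iH iF iG HFG.
have iaF : P.-integrable setT (EFin \o (fun x => a * F x)).
  exact: eq_integrable (integrableZl _ a iF).
have ibG : P.-integrable setT (EFin \o (fun x => b * G x)).
  exact: eq_integrable (integrableZl _ b iG).
have iS : P.-integrable setT (EFin \o (fun x => a * F x + b * G x)).
  exact: eq_integrable (integrableD _ iaF ibG).
have ik : P.-integrable setT (EFin \o cst k) by exact: finite_measure_integrable_cst.
have iSk : P.-integrable setT (EFin \o (fun x => a * F x + b * G x + k)).
  exact: eq_integrable (integrableD _ iS ik).
have -> : k = Rintegral P setT (cst k).
  by rewrite Rintegral_cst //; have /= -> := probability_setT P; rewrite mulr1.
rewrite -!RintegralZl // -!RintegralD //.
by apply: le_Rintegral.
Qed.

End Expectation.

Section Objective.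
Variables (R : realType) (d : measure_display) (T : measurableType d).
Variables (A K : finType) (delta : K -> A -> bool).
Variables (t0 c alpha beta Delta : A -> T -> R) (theta : R).
Hypotheses (t0_ge0 : forall a xi, 0 <= t0 a xi) (c_gt0 : forall a xi, 0 < c a xi)
  (alpha_ge0 : forall a xi, 0 <= alpha a xi) (beta_ge0 : forall a xi, 0 <= beta a xi)
  (Delta_ge0 : forall a xi, 0 <= Delta a xi) (theta_gt0 : 0 < theta).

Local Notation ta := (link_time t0 c alpha beta Delta).
Local Notation time a xi := (fun x => ta a x xi).
Local Notation Z := (Zobj delta t0 c alpha beta Delta theta).

Definition link_cost (f : K -> R) (xi : T) :=
  \sum_a primitive (time a xi) (link_flow delta f a).

Definition entropy (f : K -> R) := \sum_k ent1p (f k).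

Lemma ZobjE f xi : Z f xi = link_cost f xi + theta^-1 * entropy f.
Proof. by []. Qed.

Lemma link_primitive_tangent a xi x y : 0 <= x -> 0 <= y ->
  primitive (time a xi) x + ta a x xi * (y - x)
  <= primitive (time a xi) y.
Proof.
apply: primitive_tangent; first exact: measurable_link_time.
  by move=> z _; exact: link_time_ge0.
exact: link_time_homo.
Qed.

Lemma link_primitive_ge0 a xi x : 0 <= primitive (time a xi) x.
Proof. by apply: primitive_ge0 => z _; exact: link_time_ge0. Qed.

Lemma link_cost_ge0 f xi : 0 <= link_cost f xi.
Proof. by apply: sumr_ge0 => a _; exact: link_primitive_ge0. Qed.

Lemma entropy_ge0 f : (forall k, 0 <= f k) -> 0 <= entropy f.
Proof. by move=> f0; apply: sumr_ge0 => k _; exact: ent1p_ge0. Qed.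

Lemma Zobj_ge0 f xi : (forall k, 0 <= f k) -> 0 <= Z f xi.
Proof.
move=> f0; rewrite ZobjE addr_ge0 ?link_cost_ge0 // mulr_ge0 ?entropy_ge0 //.
by rewrite invr_ge0 ltW.
Qed.

Section Convexity.
Variables (l : R) (f g : K -> R).
Hypotheses (f_ge0 : forall k, 0 <= f k) (g_ge0 : forall k, 0 <= g k).

Lemma link_cost_convex xi : 0 <= l <= 1 ->
  link_cost (mix l f g) xi <= l * link_cost f xi + (1 - l) * link_cost g xi.
Proof.
move=> l01; rewrite /link_cost !mulr_sumr -big_split; apply: ler_sum => a _ /=.
rewrite link_flow_mix; apply: (convex_of_tangent (link_primitive_tangent a xi)) => //.
  exact: link_flow_ge0.
exact: link_flow_ge0.
Qed.

Lemma entropy_convex : 0 <= l <= 1 ->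
  entropy (mix l f g) <= l * entropy f + (1 - l) * entropy g.
Proof.
move=> l01; rewrite /entropy !mulr_sumr -big_split; apply: ler_sum => k _ /=.
exact: (convex_of_tangent (@ent1p_tangent R)).
Qed.

Lemma entropy_strict_convex : 0 < l < 1 -> f <> g ->
  entropy (mix l f g) < l * entropy f + (1 - l) * entropy g.
Proof.
move=> l01 fg; have [k0 fg0] : exists k, f k != g k.
  apply: contrapT => /forallNP fg_eq; apply: fg; apply/funext => k.
  by apply: contrapT => /eqP; exact: fg_eq.
have l01' : 0 <= l <= 1 by case/andP: l01 => /ltW -> /ltW ->.
rewrite /entropy !mulr_sumr -big_split (bigD1 k0) //= [X in _ < X](bigD1 k0) //=.
apply: ltr_leD; first exact: (strict_convex_of_tangent (@ent1p_tangent_strict R)).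
by apply: ler_sum => k _; exact: (convex_of_tangent (@ent1p_tangent R)).
Qed.

Lemma Zobj_mix xi : 0 <= l <= 1 ->
  Z (mix l f g) xi <= l * Z f xi + (1 - l) * Z g xi
    - theta^-1 * (l * entropy f + (1 - l) * entropy g - entropy (mix l f g)).
Proof.
move=> l01; rewrite !ZobjE.
set Ef := entropy f; set Eg := entropy g; set Em := entropy (mix l f g).
have -> : l * (link_cost f xi + theta^-1 * Ef) + (1 - l) * (link_cost g xi + theta^-1 * Eg)
    - theta^-1 * (l * Ef + (1 - l) * Eg - Em)
    = l * link_cost f xi + (1 - l) * link_cost g xi + theta^-1 * Em by ring.
by rewrite lerD2r link_cost_convex.
Qed.

End Convexity.

Section Lipschitz.
Variable Q : R.
Hypothesis Q_ge0 : 0 <= Q.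

Let flow_bound := #|K|%:R * Q + 1.
Let Zbound xi := Z (fun _ => flow_bound) xi.

Let flow_bound_ge0 : 0 <= flow_bound.
Proof. by rewrite addr_ge0 // mulr_ge0. Qed.

(* [t(M) <= t(M) (X - M) <= F(X) - F(M) <= F(X)] for the convex primitive [F] of
   [t] and a flow [X >= M + 1]. *)
Lemma link_time_le_Zobj a xi x : 0 <= x <= #|K|%:R * Q -> (exists k, delta k a) ->
  ta a x xi <= Zbound xi.
Proof.
move=> /andP[x0 xM] [k1 k1a]; set M := #|K|%:R * Q in xM.
have M0 : 0 <= M by apply: le_trans xM.
set X := link_flow delta (fun _ => flow_bound) a.
have MX : M + 1 <= X.
  rewrite /X /link_flow (bigD1 k1) //= k1a mulr1 lerDl.
  by apply: sumr_ge0 => k _; rewrite mulr_ge0 ?flow_bound_ge0.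
have slope_le : ta a M xi <= primitive (time a xi) X.
  have tM0 : 0 <= ta a M xi by exact: link_time_ge0.
  have X0 : 0 <= X by lra.
  have := link_primitive_tangent a xi M0 X0; have := link_primitive_ge0 a xi M.
  have : ta a M xi <= ta a M xi * (X - M) by rewrite ler_peMr //; lra.
  lra.
have FX : primitive (time a xi) X <= Zbound xi.
  apply: le_trans (_ : link_cost (fun _ => flow_bound) xi <= _).
    by rewrite /link_cost (bigD1 a) //= lerDl sumr_ge0 // => b _; exact: link_primitive_ge0.
  by rewrite /Zbound ZobjE lerDl mulr_ge0 // ?entropy_ge0 // invr_ge0 ltW.
have tM : ta a x xi <= ta a M xi by exact: link_time_homo.
lra.
Qed.

Lemma link_flow_le_box f a : (forall k, 0 <= f k <= Q) ->
  0 <= link_flow delta f a <= #|K|%:R * Q.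
Proof.
move=> fQ; have f0 k : 0 <= f k by case/andP: (fQ k).
rewrite link_flow_ge0 //=; apply: le_trans (link_flow_le_sum _ _ f0) _.
rewrite mulr_natl -sumr_const; apply: ler_sum => k _.
by case/andP: (fQ k).
Qed.

Lemma link_primitive_lipschitz a xi f g :
  (forall k, 0 <= f k <= Q) -> (forall k, 0 <= g k <= Q) ->
  primitive (time a xi) (link_flow delta g a)
  <= primitive (time a xi) (link_flow delta f a) + Zbound xi * dist1 f g.
Proof.
move=> fQ gQ; set xf := link_flow delta f a; set xg := link_flow delta g a.
have Zb0 : 0 <= Zbound xi by exact: Zobj_ge0.
have [/existsP used|/existsPn unused] := boolP [exists k, delta k a]; last first.
  by rewrite /xf /xg !link_flow_unused // lerDl mulr_ge0 // dist1_ge0.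
have /andP[xf0 _] := link_flow_le_box a fQ.
have xg_box := link_flow_le_box a gQ; have /andP[xg0 _] := xg_box.
have := link_primitive_tangent a xi xg0 xf0.
have tg0 : 0 <= ta a xg xi by exact: link_time_ge0.
have : ta a xg xi * (xg - xf) <= Zbound xi * dist1 f g.
  apply: le_trans (_ : ta a xg xi * `|xf - xg| <= _).
    by apply: ler_wpM2l => //; rewrite distrC ler_norm.
  apply: ler_pM => //; first exact: link_time_le_Zobj xg_box used.
  exact: link_flow_dist.
have -> : ta a xg xi * (xf - xg) = - (ta a xg xi * (xg - xf)) by ring.
lra.
Qed.

Lemma link_cost_lipschitz xi f g :
  (forall k, 0 <= f k <= Q) -> (forall k, 0 <= g k <= Q) ->
  link_cost g xi <= link_cost f xi + #|A|%:R * Zbound xi * dist1 f g.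
Proof.
move=> fQ gQ; rewrite -mulrA mulr_natl -sumr_const /link_cost -big_split /=.
by apply: ler_sum => a _; exact: link_primitive_lipschitz.
Qed.

Lemma entropy_lipschitz f g :
  (forall k, 0 <= f k <= Q) -> (forall k, 0 <= g k <= Q) ->
  entropy g <= entropy f + Q * dist1 f g.
Proof.
move=> fQ gQ; rewrite /dist1 mulr_sumr /entropy -big_split /=.
apply: ler_sum => k _; have /andP[f0 _] := fQ k; have /andP[g0 gk] := gQ k.
have := ent1p_tangent g0 f0.
have : ln (g k + 1) * (g k - f k) <= Q * `|f k - g k|.
  apply: le_trans (_ : ln (g k + 1) * `|f k - g k| <= _).
    by apply: ler_wpM2l; rewrite ?ln1p_ge0 // distrC ler_norm.
  by apply: ler_wpM2r => //; apply: le_trans (ln1p_le g0) gk.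
have -> : ln (g k + 1) * (f k - g k) = - (ln (g k + 1) * (g k - f k)) by ring.
lra.
Qed.

Lemma Zobj_lipschitz xi f g :
  (forall k, 0 <= f k <= Q) -> (forall k, 0 <= g k <= Q) ->
  Z g xi <= Z f xi + (#|A|%:R * Zbound xi + theta^-1 * Q) * dist1 f g.
Proof.
move=> fQ gQ; rewrite !ZobjE.
have := link_cost_lipschitz xi fQ gQ.
have : theta^-1 * entropy g <= theta^-1 * (entropy f + Q * dist1 f g).
  by apply: ler_wpM2l; [rewrite invr_ge0 ltW | exact: entropy_lipschitz].
lra.
Qed.

End Lipschitz.

Variable Pr : probability T R.
Hypothesis Zobj_integrable : forall f : K -> R, (forall k, 0 <= f k) ->
  Pr.-integrable setT (fun xi => (Z f xi)%:E).

Local Notation E := (EZ delta Pr t0 c alpha beta Delta theta).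

Lemma EZE f : E f = Rintegral Pr setT (Z f).
Proof. by rewrite /EZ unlock. Qed.

Section ExpectedConvexity.
Variables (l : R) (f g : K -> R).
Hypotheses (f_ge0 : forall k, 0 <= f k) (g_ge0 : forall k, 0 <= g k).

Lemma EZ_mix : 0 <= l <= 1 ->
  E (mix l f g) <= l * E f + (1 - l) * E g
    - theta^-1 * (l * entropy f + (1 - l) * entropy g - entropy (mix l f g)).
Proof.
move=> l01; rewrite !EZE; apply: le_Rintegral_affine; last by move=> xi; exact: Zobj_mix.
- exact/Zobj_integrable/mix_ge0.
- exact: Zobj_integrable.
- exact: Zobj_integrable.
Qed.

Lemma EZ_convex : 0 <= l <= 1 -> E (mix l f g) <= l * E f + (1 - l) * E g.
Proof.
move=> l01; apply: le_trans (EZ_mix l01) _; rewrite lerBlDr lerDl.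
apply: mulr_ge0; first by rewrite invr_ge0 ltW.
by rewrite subr_ge0 entropy_convex.
Qed.

Lemma EZ_strict_convex : 0 < l < 1 -> f <> g ->
  E (mix l f g) < l * E f + (1 - l) * E g.
Proof.
move=> l01 fg; have l01' : 0 <= l <= 1 by case/andP: l01 => /ltW -> /ltW ->.
apply: le_lt_trans (EZ_mix l01') _; rewrite ltrBlDr ltrDl.
apply: mulr_gt0; first by rewrite invr_gt0.
by rewrite subr_gt0 entropy_strict_convex.
Qed.

End ExpectedConvexity.

Lemma EZ_lipschitz Q : 0 <= Q -> exists2 L, 0 <= L &
  forall f g, (forall k, 0 <= f k <= Q) -> (forall k, 0 <= g k <= Q) ->
  E g <= E f + L * dist1 f g.
Proof.
move=> Q0; set fb := fun _ : K => #|K|%:R * Q + 1.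
have fb0 k : 0 <= fb k by rewrite addr_ge0 // mulr_ge0.
exists (#|A|%:R * E fb + theta^-1 * Q).
  apply: addr_ge0; last by rewrite mulr_ge0 // invr_ge0 ltW.
  by rewrite mulr_ge0 // EZE; apply: Rintegral_ge0 => xi _; exact: Zobj_ge0.
move=> f g fQ gQ; have f0 k : 0 <= f k by case/andP: (fQ k).
have -> : E f + (#|A|%:R * E fb + theta^-1 * Q) * dist1 f g
    = 1 * E f + (#|A|%:R * dist1 f g) * E fb + theta^-1 * Q * dist1 f g by ring.
rewrite !EZE; apply: le_Rintegral_affine.
- by apply: Zobj_integrable => k; case/andP: (gQ k).
- exact: Zobj_integrable.
- exact: Zobj_integrable.
move=> xi; have := Zobj_lipschitz Q0 xi fQ gQ; rewrite -/fb mul1r; lra.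
Qed.

End Objective.

Section Minimizer.
Variables (R : realType) (K : finType).
Implicit Types (f g : K -> R) (u v : 'rV[R]_#|K|).

Definition fun_of_rV v : K -> R := fun k => v ord0 (enum_rank k).
Definition rV_of_fun f : 'rV[R]_#|K| := \row_i f (enum_val i).

Lemma rV_of_funK : cancel rV_of_fun fun_of_rV.
Proof. by move=> f; apply/funext => k; rewrite /fun_of_rV mxE enum_rankK. Qed.

Lemma continuous_fun_of_rV k : continuous (fun v => fun_of_rV v k).
Proof. exact: coord_continuous. Qed.

Lemma dist1_ball v u e : ball v e u -> dist1 (fun_of_rV v) (fun_of_rV u) <= #|K|%:R * e.
Proof.
move=> [_ vu]; rewrite mulr_natl -sumr_const.
by apply: ler_sum => k _; apply: ltW; exact: vu.
Qed.

Lemma lipschitz_continuous_within (S : set (K -> R)) (F : (K -> R) -> R) (L : R) :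
  0 <= L -> (forall f g, S f -> S g -> F g <= F f + L * dist1 f g) ->
  {within [set v | S (fun_of_rV v)], continuous (F \o fun_of_rV)}.
Proof.
move=> L0 F_lip; rewrite continuous_subspace_in => v; rewrite inE => Sv.
apply/cvgrPdist_lt => e e0; rewrite -nbhs_subspace_in // near_withinE.
set C := L * #|K|%:R + 1.
have C0 : 0 < C by rewrite ltr_wpDl // mulr_ge0.
apply/nbhs_ballP; exists (e / C); first by rewrite /= divr_gt0.
move=> u vu Su /=; have := dist1_ball vu.
have := F_lip _ _ Sv Su; have := F_lip _ _ Su Sv; rewrite dist1C.
set D := dist1 _ _ => Fvu Fuv D_le.
set r := e / C in D_le.
have Cr : C * r = e by rewrite /r mulrC divfK // lt0r_neq0.
have LCr : L * #|K|%:R * r < C * r by rewrite ltr_pM2r ?divr_gt0 // /C ltrDl.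
have : L * D <= L * (#|K|%:R * r) by exact: ler_wpM2l.
move=> LD; rewrite /from_subspace /= ltr_norml; apply/andP; split; lra.
Qed.

Lemma exists_minimizer (S : set (K -> R)) (F : (K -> R) -> R) (Q L : R) :
  (exists f, S f) -> (forall f, S f -> forall k, `|f k| <= Q) ->
  closed [set v | S (fun_of_rV v)] ->
  0 <= L -> (forall f g, S f -> S g -> F g <= F f + L * dist1 f g) ->
  exists f, S f /\ forall g, S g -> F f <= F g.
Proof.
move=> [f0 Sf0] S_bounded S_closed L0 F_lip.
have S_compact : compact [set v | S (fun_of_rV v)].
  apply: (subclosed_compact S_closed (rV_compact (A := fun _ => `[-Q, Q]%classic) _)).
    by move=> _; exact: segment_compact.
  move=> v Sv i; rewrite /= in_itv /= -ler_norml.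
  by have := S_bounded _ Sv (enum_val i); rewrite /fun_of_rV enum_valK.
have S_nonempty : [set v | S (fun_of_rV v)] !=set0.
  by exists (rV_of_fun f0); rewrite /= rV_of_funK.
have [v Sv vmin] := EVT_min_rV S_nonempty S_compact (lipschitz_continuous_within L0 F_lip).
exists (fun_of_rV v); split; first by rewrite inE in Sv.
by move=> g Sg; rewrite -[g]rV_of_funK; apply: vmin; rewrite inE /= rV_of_funK.
Qed.

Lemma minimizer_unique (S : set (K -> R)) (F : (K -> R) -> R) (l : R) f h :
  0 < l < 1 -> (forall f g, S f -> S g -> S (mix l f g)) ->
  (forall f g, S f -> S g -> f <> g -> F (mix l f g) < l * F f + (1 - l) * F g) ->
  S f -> (forall g, S g -> F f <= F g) ->
  S h -> (forall g, S g -> F h <= F g) -> h = f.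
Proof.
move=> /andP[l0 l1] S_mix F_strict Sf fmin Sh hmin; apply: contrapT => hf.
have := F_strict _ _ Sh Sf hf; have := fmin _ (S_mix _ _ Sh Sf).
have : l * F h <= l * F f by rewrite ler_pM2l // hmin.
lra.
Qed.

End Minimizer.

Section Feasibility.
Variables (R : realType) (W K : finType) (od : K -> W) (q : W -> R).
Hypothesis q_ge0 : forall w, 0 <= q w.

Lemma feasible_exists : (forall w, exists k, od k = w) -> exists f, feasible od q f.
Proof.
move=> /choice[kw kwP]; exists (fun k => if kw (od k) == k then q (od k) else 0); split.
  move=> w; rewrite (bigD1 (kw w)) /= ?kwP // eqxx big1 ?addr0 // => k /andP[/eqP <- kwk].
  by rewrite eq_sym (negbTE kwk).
by move=> k; case: ifP.
Qed.

Lemma feasible_le_demand f : feasible od q f -> forall k, 0 <= f k <= \sum_w q w.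
Proof.
move=> [demand f0] k; rewrite f0 /=; apply: le_trans (_ : q (od k) <= _).
  by rewrite -demand (bigD1 k) //= lerDl sumr_ge0.
by rewrite (bigD1 (od k)) //= lerDl sumr_ge0.
Qed.

Lemma feasible_mix l f g : 0 <= l <= 1 ->
  feasible od q f -> feasible od q g -> feasible od q (mix l f g).
Proof.
move=> l01 [fd f0] [gd g0]; split; last exact: mix_ge0.
by move=> w; rewrite big_split /= -!mulr_sumr fd gd; ring.
Qed.

Lemma closed_feasible : closed [set v : 'rV[R]_#|K| | feasible od q (fun_of_rV v)].
Proof.
have sum_continuous w : continuous (fun v : 'rV[R]_#|K| => \sum_(k | od k == w) fun_of_rV v k).
  move=> v; apply: cvg_big; [exact: add_continuous | exact: nbhs_filter |].
  by move=> k _; exact: continuous_fun_of_rV.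
have -> : [set v : 'rV[R]_#|K| | feasible od q (fun_of_rV v)] =
    \bigcap_w ((fun v => \sum_(k | od k == w) fun_of_rV v k) @^-1` [set q w])
    `&` \bigcap_k ((fun v => fun_of_rV v k) @^-1` [set x | 0 <= x]).
  apply/seteqP; split => v [demand v0]; split.
  - by move=> w _; exact: demand.
  - by move=> k _; exact: v0.
  - by move=> w; exact: (demand w I).
  - by move=> k; exact: (v0 k I).
apply: closedI; apply: closed_bigI => i _; apply: preimage_closed.
- by move=> v _; exact: sum_continuous.
- exact: closed_eq.
- by move=> v _; exact: continuous_fun_of_rV.
- exact: closed_ge.
Qed.

End Feasibility.

Theorem proposition1 (R : realType) (d : measure_display) (T : measurableType d)
  (Pr : probability T R)
  (A W K : finType) (od : K -> W) (delta : K -> A -> bool)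
  (q : W -> R) (t0 c alpha beta Delta : A -> T -> R) (theta : R) :
  (forall w : W, exists k : K, od k = w) ->
  (forall w : W, 0 <= q w) ->
  (forall a xi, 0 < t0 a xi) ->
  (forall a xi, 0 < c a xi) ->
  (forall a xi, 0 <= alpha a xi) ->
  (forall a xi, 1 <= beta a xi) ->
  (forall a xi, 0 <= Delta a xi) ->
  0 < theta ->
  (forall f : K -> R, (forall k, 0 <= f k) ->
     Pr.-integrable setT (fun xi => (Zobj delta t0 c alpha beta Delta theta f xi)%:E)) ->
  (forall (f g : K -> R) (l : R), (forall k, 0 <= f k) -> (forall k, 0 <= g k) ->
     0 <= l <= 1 ->
     EZ delta Pr t0 c alpha beta Delta theta (fun k => l * f k + (1 - l) * g k)
       <= l * EZ delta Pr t0 c alpha beta Delta theta f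
          + (1 - l) * EZ delta Pr t0 c alpha beta Delta theta g)
  /\
  (exists f : K -> R,
     [/\ feasible od q f,
         (forall g, feasible od q g ->
            EZ delta Pr t0 c alpha beta Delta theta f
              <= EZ delta Pr t0 c alpha beta Delta theta g)
       & (forall h, feasible od q h ->
            (forall g, feasible od q g ->
               EZ delta Pr t0 c alpha beta Delta theta h
                 <= EZ delta Pr t0 c alpha beta Delta theta g) ->
            h = f)]).
Proof.
move=> od_onto q_ge0 t0_gt0 c_gt0 alpha_ge0 beta_ge1 Delta_ge0 theta_gt0 Z_int.
have t0_ge0 a xi : 0 <= t0 a xi by exact/ltW.
have beta_ge0 a xi : 0 <= beta a xi by exact: le_trans ler01 (beta_ge1 a xi).
split=> [f g l f0 g0 l01|].
  exact: (EZ_convex t0_ge0 c_gt0 alpha_ge0 beta_ge0 Delta_ge0 theta_gt0 Z_int).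
have feasible_norm f : feasible od q f -> forall k, `|f k| <= \sum_w q w.
  by move=> Sf k; have /andP[f0 fQ] := feasible_le_demand q_ge0 Sf k; rewrite ger0_norm.
have Q0 : 0 <= \sum_w q w by exact: sumr_ge0.
have [L L0 EZ_lip] :=
  EZ_lipschitz t0_ge0 c_gt0 alpha_ge0 beta_ge0 Delta_ge0 theta_gt0 Z_int Q0.
have [f [Sf fmin]] := exists_minimizer (feasible_exists q_ge0 od_onto) feasible_norm
  (closed_feasible (od := od) (q := q)) L0
  (fun f g Sf Sg => EZ_lip f g (feasible_le_demand q_ge0 Sf) (feasible_le_demand q_ge0 Sg)).
exists f; split=> // h Sh hmin.
have half : 0 < (2^-1 : R) < 1 by apply/andP; split; lra.
have half' : 0 <= (2^-1 : R) <= 1 by apply/andP; split; lra.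
apply: (minimizer_unique half _ _ Sf fmin Sh hmin).
  by move=> g g'; exact: feasible_mix half'.
move=> g g' [_ g0] [_ g'0].
exact: (EZ_strict_convex t0_ge0 c_gt0 alpha_ge0 beta_ge0 Delta_ge0 theta_gt0 Z_int g0 g'0).
Qed.
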